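(* Let $\mathcal D\subset\mathbb{R}^d$ be a linear subspace with orthonormal basis given by the columns of $\mathbf V$, so that $\mathbf P=\mathbf V\mathbf V^T$ is the orthogonal projection onto $\mathcal D$. Let $\boldsymbol\theta\in\mathbb{R}^{d\times d}$ be invertible and let $\hat{\mathbf P}$ be the orthogonal projection onto $\boldsymbol\theta\mathcal D=\{\boldsymbol\theta\mathbf x:\mathbf x\in\mathcal D\}$. Then $$\|\boldsymbol\theta^{-1}\hat{\mathbf P}\boldsymbol\theta-\mathbf P\|_2\le\big(1+\kappa(\boldsymbol\theta)^2\big)\,\|\mathbf I-\boldsymbol\theta^T\boldsymbol\theta\|_2.$$
   Context: $\|\cdot\|_2$ denotes the spectral (operator 2-) norm and $\kappa(\boldsymbol\theta)=\|\boldsymbol\theta\|_2\|\boldsymbol\theta^{-1}\|_2$ the condition number. *)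

From mathcomp Require Import all_boot all_order all_algebra.
From mathcomp Require Import all_classical all_reals.
Set Implicit Arguments. Unset Strict Implicit. Unset Printing Implicit Defensive.
Import Order.TTheory GRing.Theory Num.Theory.
Local Open Scope ring_scope.
Local Open Scope classical_set_scope.

Definition vnorm (R : realType) (n : nat) (x : 'cV[R]_n) : R :=
  Num.sqrt (\sum_(i < n) x i 0 ^+ 2).

Definition opnorm (R : realType) (m n : nat) (A : 'M[R]_(m, n)) : R :=
  sup [set vnorm (A *m x) | x in [set x : 'cV[R]_n | vnorm x <= 1]].

Definition cond (R : realType) (n : nat) (A : 'M[R]_n) : R :=
  opnorm A * opnorm (invmx A).

(* Q is the orthogonal projection onto the column space of A:
   symmetric, idempotent, with column space equal to that of A. *)
Definition is_orth_proj (R : realType) (d k : nat)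
  (Q : 'M[R]_d) (A : 'M[R]_(d, k)) : Prop :=
  [/\ Q^T = Q, Q *m Q = Q & (Q^T == A^T)%MS].

From mathcomp Require Import all_boot all_order all_algebra.
From mathcomp Require Import all_classical all_reals.
From mathcomp Require Import ring lra.
Import Order.TTheory GRing.Theory Num.Theory.
Local Open Scope ring_scope.

(** Write [P = V V^T], [Q = theta^-1 Phat theta] and [E = I - theta^T theta].
  Both [P] and [Q] are projections with range [D], so [Q - P = Q (I - P)].
  For [z = (I - P) x] the vector [y = Q z] lies in [D], hence is orthogonal
  to [z], while [theta y = Phat (theta z)] is the orthogonal projection of
  [theta z]. Expanding [<theta y, theta z - theta y> = 0] with
  [<theta a, theta b> = <a, b> - <a, E b>] gives [|y|^2 <= |E| |y| (|y| + |z|)].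
  Combined with the crude bound [|y| <= kappa |z|] this yields
  [|y| <= (1 + kappa^2) |E| |z|], according to whether [|E| >= 1/2] or not. *)

Section InnerProduct.
Context {R : realType} {n : nat}.
Implicit Types (u v w : 'cV[R]_n) (A : 'M[R]_n).

Definition dot u v : R := \sum_(i < n) u i 0 * v i 0.

Lemma dotC u v : dot u v = dot v u.
Proof. by apply: eq_bigr => i _; rewrite mulrC. Qed.

Lemma dotBr u v w : dot u (v - w) = dot u v - dot u w.
Proof. by rewrite /dot -sumrB; apply: eq_bigr => i _; rewrite !mxE mulrBr. Qed.

Lemma dotBl u v w : dot (v - w) u = dot v u - dot w u.
Proof. by rewrite dotC dotBr !(dotC u). Qed.

Lemma dotZr (c : R) u v : dot u (c *: v) = c * dot u v.
Proof. by rewrite /dot mulr_sumr; apply: eq_bigr => i _; rewrite mxE mulrCA. Qed.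

Lemma dotZl (c : R) u v : dot (c *: v) u = c * dot v u.
Proof. by rewrite dotC dotZr dotC. Qed.

Lemma dot0r u : dot u 0 = 0.
Proof. by rewrite /dot big1 // => i _; rewrite mxE mulr0. Qed.

Lemma dot_mulmxl A u v : dot (A *m u) v = dot u (A^T *m v).
Proof.
have dotE w w' : dot w w' = (w^T *m w') 0 0.
  by rewrite mxE; apply: eq_bigr => i _; rewrite mxE.
by rewrite !dotE trmx_mul mulmxA.
Qed.

Lemma dot_ge0 u : 0 <= dot u u.
Proof. by apply: sumr_ge0 => i _; rewrite -expr2 sqr_ge0. Qed.

Lemma dot_eq0 u : (dot u u == 0) = (u == 0).
Proof.
apply/eqP/eqP => [uu0|->]; last exact: dot0r.
apply/matrixP => i j; rewrite (ord1 j) mxE; apply/eqP; rewrite -sqrf_eq0 expr2.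
by apply/eqP; apply: (psumr_eq0P _ uu0) => // l _; rewrite -expr2 sqr_ge0.
Qed.

Lemma dot_sqr_le u v : dot u v ^+ 2 <= dot u u * dot v v.
Proof.
have [->|v0] := eqVneq v 0; first by rewrite !dot0r expr0n mulr0.
have vv_gt0 : 0 < dot v v by rewrite lt_neqAle eq_sym dot_eq0 v0 dot_ge0.
(* nonnegativity of [|u - t v|^2] at the minimising [t = <u, v> / <v, v>] *)
have := dot_ge0 (u - (dot u v / dot v v) *: v).
rewrite dotBl !dotBr !dotZl !dotZr (dotC v u).
have -> : dot u u - dot u v / dot v v * dot u v
    - (dot u v / dot v v * dot u v
       - dot u v / dot v v * (dot u v / dot v v * dot v v))
    = (dot u u * dot v v - dot u v ^+ 2) / dot v v.
  by field; rewrite gt_eqF.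
by rewrite pmulr_lge0 ?invr_gt0 // subr_ge0.
Qed.

Lemma vnorm_dot u : vnorm u = Num.sqrt (dot u u).
Proof. by congr Num.sqrt; apply: eq_bigr => i _; rewrite expr2. Qed.

Lemma vnorm_sqr u : vnorm u ^+ 2 = dot u u.
Proof. by rewrite vnorm_dot sqr_sqrtr ?dot_ge0. Qed.

Lemma vnorm_ge0 u : 0 <= vnorm u.
Proof. exact: sqrtr_ge0. Qed.

Lemma vnorm0 : vnorm (0 : 'cV[R]_n) = 0.
Proof. by rewrite vnorm_dot dot0r sqrtr0. Qed.

Lemma vnormZ (c : R) u : vnorm (c *: u) = `|c| * vnorm u.
Proof.
rewrite !vnorm_dot dotZl dotZr mulrA -expr2 sqrtrM ?sqr_ge0 //.
by rewrite sqrtr_sqr.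
Qed.

Lemma cauchy_schwarz u v : `|dot u v| <= vnorm u * vnorm v.
Proof.
rewrite !vnorm_dot -sqrtrM ?dot_ge0 // -sqrtr_sqr ler_sqrt ?dot_sqr_le //.
by rewrite mulr_ge0 ?dot_ge0.
Qed.

Lemma normr_entry_le_vnorm u i : `|u i 0| <= vnorm u.
Proof.
rewrite /vnorm -sqrtr_sqr ler_sqrt; last by apply: sumr_ge0 => j _; rewrite sqr_ge0.
by rewrite (bigD1 i) //= lerDl; apply: sumr_ge0 => j _; rewrite sqr_ge0.
Qed.

Lemma vnorm_orth_proj_le A u : A^T = A -> A *m A = A -> vnorm (A *m u) <= vnorm u.
Proof.
move=> AT AA; rewrite !vnorm_dot ler_sqrt ?dot_ge0 // -subr_ge0.
have AuAu : dot (A *m u) (A *m u) = dot u (A *m u) by rewrite dot_mulmxl mulmxA AT AA.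
suff <- : dot (u - A *m u) (u - A *m u) = dot u u - dot (A *m u) (A *m u) by exact: dot_ge0.
by rewrite dotBl !dotBr AuAu (dotC (A *m u) u); ring.
Qed.

Lemma dot_orth_proj_compl A u :
  A^T = A -> A *m A = A -> dot (A *m u) (u - A *m u) = 0.
Proof. by move=> AT AA; rewrite dot_mulmxl AT mulmxBr mulmxA AA subrr dot0r. Qed.

Lemma dot_mulmx_defect A u v :
  dot (A *m u) (A *m v) = dot u v - dot u ((1%:M - A^T *m A) *m v).
Proof. by rewrite dot_mulmxl mulmxBl mul1mx dotBr mulmxA opprB addrC subrK. Qed.

End InnerProduct.

Section OperatorNorm.
Local Open Scope classical_set_scope.
Context {R : realType} {m n : nat}.
Implicit Types (A : 'M[R]_(m, n)) (x : 'cV[R]_n).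

Lemma opnorm_set_has_ubound A :
  has_ubound [set vnorm (A *m x) | x in [set x : 'cV[R]_n | vnorm x <= 1]].
Proof.
exists (Num.sqrt (\sum_(i < m) (\sum_(j < n) `|A i j|) ^+ 2)) => _ [x /= x1 <-].
rewrite /vnorm ler_sqrt; last by apply: sumr_ge0 => j _; rewrite sqr_ge0.
apply: ler_sum => i _; rewrite -real_normK ?num_real // ler_sqr ?nnegrE //; last first.
  by apply: sumr_ge0 => j _; exact: normr_ge0.
rewrite mxE; apply: le_trans (ler_norm_sum _ _ _) _; apply: ler_sum => j _.
rewrite normrM; apply: ler_piMr => //; exact: le_trans (normr_entry_le_vnorm x j) x1.
Qed.

Lemma opnorm_le A (c : R) :
  (forall x, vnorm x <= 1 -> vnorm (A *m x) <= c) -> opnorm A <= c.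
Proof.
move=> Ac; apply: ge_sup; last by move=> _ [x /= x1 <-]; exact: Ac.
by exists (vnorm (A *m 0)), 0 => //=; rewrite vnorm0.
Qed.

Lemma opnorm_ub1 A x : vnorm x <= 1 -> vnorm (A *m x) <= opnorm A.
Proof. by move=> x1; apply: (ub_le_sup (opnorm_set_has_ubound A)); exists x. Qed.

Lemma opnorm_ge0 A : 0 <= opnorm A.
Proof. by have := opnorm_ub1 A 0; rewrite mulmx0 !vnorm0; apply; exact: ler01. Qed.

Lemma vnorm_mulmx_le A x : vnorm (A *m x) <= opnorm A * vnorm x.
Proof.
have [->|x0] := eqVneq x 0; first by rewrite mulmx0 !vnorm0 mulr0.
have x_gt0 : 0 < vnorm x by rewrite vnorm_dot sqrtr_gt0 lt_neqAle eq_sym dot_eq0 x0 dot_ge0.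
have := opnorm_ub1 A ((vnorm x)^-1 *: x).
rewrite -scalemxAr !vnormZ ger0_norm ?invr_ge0 ?vnorm_ge0 // mulVf ?gt_eqF //.
rewrite lexx => /(_ isT).
by rewrite -(ler_pM2r x_gt0) mulrAC mulVf ?gt_eqF ?mul1r.
Qed.

End OperatorNorm.

Section OrthProjector.
Context {R : realType} {n : nat} {P : 'M[R]_n}.
Hypotheses (PT : P^T = P) (PP : P *m P = P).

Lemma orth_proj_complT : (1%:M - P)^T = 1%:M - P.
Proof. by rewrite linearB /= trmx1 PT. Qed.

Lemma orth_proj_compl_idem : (1%:M - P) *m (1%:M - P) = 1%:M - P.
Proof. by rewrite mulmxBl !mulmxBr !mul1mx mulmx1 PP subrr subr0. Qed.

End OrthProjector.

Lemma orth_proj_mul_id {R : realType} {d k : nat} {Q : 'M[R]_d} {A : 'M[R]_(d, k)} :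
  is_orth_proj Q A -> Q *m A = A.
Proof.
case=> QT QQ /andP[_ /submxP[C AC]].
by rewrite -[A]trmxK AC trmx_mul trmxK mulmxA QQ.
Qed.

Lemma orth_proj_factor {R : realType} {d k : nat} {Q : 'M[R]_d} {A : 'M[R]_(d, k)} :
  is_orth_proj Q A -> exists D : 'M[R]_(k, d), Q = A *m D.
Proof.
by case=> _ _ /andP[/submxP[D QD] _]; exists D^T; rewrite -[Q]trmxK QD trmx_mul trmxK.
Qed.

Lemma quadratic_defect_bound {R : realType} (y z e k : R) :
  0 <= y -> 0 <= z -> 0 <= e -> y <= k * z -> z <= k * z ->
  y ^+ 2 <= e * y ^+ 2 + e * y * z -> y <= (1 + k ^+ 2) * e * z.
Proof.
move=> y0 z0 e0 ykz zkz yquad.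
have [z_eq0|z_neq0] := eqVneq z 0; first by move: ykz; rewrite z_eq0 !mulr0.
have z_gt0 : 0 < z by rewrite lt_def z_neq0.
have k1 : 1 <= k by rewrite -(ler_pM2r z_gt0) mul1r.
have k_le : k <= (1 + k ^+ 2) / 2 by have := sqr_ge0 (k - 1); lra.
have [e_ge|e_lt] := leP (1 / 2) e.
  have : k * z <= (1 + k ^+ 2) / 2 * z by rewrite ler_pM2r.
  have : (1 + k ^+ 2) / 2 * z <= (1 + k ^+ 2) * e * z.
    by rewrite ler_pM2r // ler_pM2l ?ltr_pwDl ?sqr_ge0 //; lra.
  lra.
have [->|y_neq0] := eqVneq y 0; first by rewrite mulr_ge0 ?mulr_ge0 ?addr_ge0 ?sqr_ge0.
have y_gt0 : 0 < y by rewrite lt_def y_neq0.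
have : y * (1 - e) <= e * z by rewrite -(ler_pM2l y_gt0); nra.
have : 2 * (e * z) <= (1 + k ^+ 2) * (e * z) by rewrite ler_wpM2r ?mulr_ge0 //; nra.
rewrite -mulrA; nra.
Qed.

Section ConjugatedProjection.
Context {R : realType} {n : nat}.
Variables (theta Phat : 'M[R]_n).
Hypotheses (PhatT : Phat^T = Phat) (PhatPhat : Phat *m Phat = Phat).

Let E := 1%:M - theta^T *m theta.

Lemma vnorm_conj_proj_le z :
  vnorm (invmx theta *m Phat *m theta *m z) <= cond theta * vnorm z.
Proof.
rewrite -!mulmxA /cond (mulrC (opnorm theta)) -mulrA.
apply: (le_trans (vnorm_mulmx_le _ _)); apply: ler_wpM2l; first exact: opnorm_ge0.
exact: le_trans (vnorm_orth_proj_le _ _ PhatT PhatPhat) (vnorm_mulmx_le _ _).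
Qed.

Lemma vnorm_conj_proj_sqr_le z :
  theta \in unitmx ->
  let y := invmx theta *m Phat *m theta *m z in dot y z = 0 ->
  vnorm y ^+ 2 <= opnorm E * vnorm y ^+ 2 + opnorm E * vnorm y * vnorm z.
Proof.
move=> theta_unit y yz0.
have theta_y : theta *m y = Phat *m (theta *m z) by rewrite /y -!mulmxA mulKVmx.
have := dot_orth_proj_compl _ (theta *m z) PhatT PhatPhat.
rewrite -theta_y -mulmxBr dot_mulmx_defect -/E mulmxBr !dotBr yz0 -vnorm_sqr.
have E_bound w : `|dot y (E *m w)| <= vnorm y * (opnorm E * vnorm w).
  by apply: le_trans (cauchy_schwarz _ _) (ler_wpM2l (vnorm_ge0 _) (vnorm_mulmx_le _ _)).
have := ler_norm (dot y (E *m y)); have := ler_norm (- dot y (E *m z)).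
rewrite normrN; have := E_bound y; have := E_bound z; nra.
Qed.

End ConjugatedProjection.

Lemma vnorm_le_cond {R : realType} {n : nat} (theta : 'M[R]_n) (x : 'cV[R]_n) :
  theta \in unitmx -> vnorm x <= cond theta * vnorm x.
Proof.
move=> theta_unit; have := vnorm_conj_proj_le theta 1%:M (trmx1 _ _) (mulmx1 _) x.
by rewrite mulmx1 mulVmx // mul1mx.
Qed.

Section ProjectionPerturbation.
Context {R : realType} {d k : nat}
  {V : 'M[R]_(d, k)} {theta Phat : 'M[R]_d}.
Hypotheses (VTV : V^T *m V = 1%:M) (theta_unit : theta \in unitmx).
Hypothesis Phat_proj : is_orth_proj Phat (theta *m V).

Let P := V *m V^T.
Let Q := invmx theta *m Phat *m theta.

Let PT : P^T = P. Proof. by rewrite /P trmx_mul trmxK. Qed.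
Let PP : P *m P = P. Proof. by rewrite /P mulmxA -(mulmxA V) VTV mulmx1. Qed.

Lemma conj_proj_mul_orth : Q *m P = P.
Proof.
rewrite /Q /P -!mulmxA (mulmxA theta) (mulmxA Phat) (orth_proj_mul_id Phat_proj).
by rewrite -mulmxA mulKmx.
Qed.

Lemma orth_mul_conj_proj : P *m Q = Q.
Proof.
rewrite /Q /P.
have [D ->] := orth_proj_factor Phat_proj.
by rewrite -!mulmxA mulKmx // !mulmxA -(mulmxA V) VTV mulmx1.
Qed.

Lemma vnorm_conj_proj_sub_le x :
  vnorm ((Q - P) *m x)
    <= (1 + cond theta ^+ 2) * opnorm (1%:M - theta^T *m theta) * vnorm x.
Proof.
have [PhatT PhatPhat _] := Phat_proj.
set z := (1%:M - P) *m x.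
have -> : (Q - P) *m x = Q *m z by rewrite /z mulmxA mulmxBr mulmx1 conj_proj_mul_orth.
(* [Q z] lies in the range of [P], which is orthogonal to [z] *)
have Qz_z : dot (Q *m z) z = 0.
  rewrite -orth_mul_conj_proj -mulmxA dot_mulmxl PT /z (mulmxA P) mulmxBr mulmx1 PP.
  by rewrite subrr mul0mx dot0r.
have z_le : vnorm z <= vnorm x.
  exact: vnorm_orth_proj_le _ _ (orth_proj_complT PT) (orth_proj_compl_idem PP).
apply: le_trans (ler_wpM2l _ z_le); last first.
  by rewrite mulr_ge0 ?opnorm_ge0 ?addr_ge0 ?sqr_ge0.
apply: quadratic_defect_bound; rewrite ?vnorm_ge0 ?opnorm_ge0 //.
- exact: vnorm_conj_proj_le.
- exact: vnorm_le_cond.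
- exact: vnorm_conj_proj_sqr_le.
Qed.

End ProjectionPerturbation.

Theorem mainTheorem6 (R : realType) (d k : nat)
  (V : 'M[R]_(d, k)) (theta Phat : 'M[R]_d) :
  V^T *m V = 1%:M ->
  theta \in unitmx ->
  is_orth_proj Phat (theta *m V) ->
  opnorm (invmx theta *m Phat *m theta - V *m V^T)
    <= (1 + cond theta ^+ 2) * opnorm (1%:M - theta^T *m theta).
Proof.
move=> VTV theta_unit Phat_proj; apply: opnorm_le => x x_le1.
apply: le_trans (vnorm_conj_proj_sub_le VTV theta_unit Phat_proj x) _.
by rewrite ler_piMr ?mulr_ge0 ?opnorm_ge0 ?addr_ge0 ?sqr_ge0.
Qed.
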